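(* For every choice of environment function $Env()$, ESAdapt under the reward function $Rew_{\#comp}()$ is unsolvable: there is no algorithm (Turing machine), regardless of running time or memory, that produces the correct output for every instance.
   Context: Model. Let $X=\{x_1,\dots,x_{|X|}\}$ be Boolean variables and $O$ a finite output set. Software system requirements are a finite set $R$ of pairs $(i,o)$, where $i$ is a truth assignment to $X$ and $o\in O$. Interfaces and components follow the Dana runtime component model: an interface is a set of function prototypes (function name, return type, parameter types) together with a set of typed transfer fields; a component provides one or more interfaces and requires zero or more interfaces, and contains code (in a Dana-like imperative language with assignments, conditionals, loops, arrays, function calls and an output statement; this language can simulate any Turing machine) implementing every function of its provided interfaces; this code may call functions and use transfer fields of its required interfaces. $L_{int}$ and $L_{comp}$ are finite libraries of interfaces and components. Given a base component $c\in L_{comp}$ implementing a function main, a valid component-based software system $S$ based on $c$ is obtained by choosing, for each required interface of $c$, a component of $L_{comp}$ providing it, and recursively for each required interface of every chosen component; separate copies of a component are used for separate required-interface occurrences, and when a component providing several interfaces implements one of them, only a reduced copy containing that interface's code is used. Its component wiring tree has root $c$, vertices the chosen component copies, arcs labelled by the implemented interfaces; no component label may occur twice on a root-to-leaf path. $S$ is working relative to $R$ if for every $(i,o)\in R$, running $S$ on input $i$ outputs $o$. An environment function $Env()$ maps a system to events/metric values and is computable in polynomial time. $Rew_{\#comp}(S)$ is the number of components in $S$. Problem ESAdapt under $Rew_{\#comp}()$: Input: $R$, $L_{int}$, $L_{comp}$, a working system $S$ based on a component $c\in L_{comp}$ relative to $R$, $L_{int}$, $L_{comp}$, and $Env()$.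 Output: a working system $S'$ based on $c$ relative to $L_{int},L_{comp},R$ having the smallest value of $Rew_{\#comp}(S')$ over all working systems based on $c$ relative to $L_{int},L_{comp},R$. *)

From mathcomp Require Import all_boot.

Set Implicit Arguments.
Unset Strict Implicit.
Unset Printing Implicit Defensive.

(* 1. The Dana-like imperative language                                   *)

Inductive val : Type :=
| VNat of nat
| VBool of bool
| VArr of seq val.

Inductive ty : Type := TInt | TBool | TArr of ty | TVoid.

Inductive binop : Type := BAdd | BSub | BMul | BDiv | BMod | BEq | BLt | BAnd | BOr.

(* Expressions.  [ECall k f args] calls function [f] of the [k]-th required
   interface of the current component; [EField k x] reads transfer field [x]
   of the [k]-th required interface; [EInput j] reads the truth value of the
   input variable x_(j+1). *)
Inductive expr : Type :=
| EConst of val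
| EVar of nat
| EInput of nat
| EBin of binop & expr & expr
| ENot of expr
| ENewArr of expr
| ELen of expr
| EIndex of expr & expr
| ECall of nat & nat & seq expr
| EField of nat & nat.

(* Statements.  [SOutput e] outputs the value of [e] (and ends the run). *)
Inductive stmt : Type :=
| SSkip
| SAssign of nat & expr
| SArrSet of nat & expr & expr
| SSeq of stmt & stmt
| SIf of expr & stmt & stmt
| SWhile of expr & stmt
| SReturn of expr
| SOutput of expr
| SExpr of expr
| SSetField of nat & nat & expr.

(* 2. Interfaces, components, wiring trees                                *)

Record proto := Proto { pname : nat; pret : ty; pparams : seq ty }.

Record iface := Iface { iname : nat; iprotos : seq proto; ifields : seq (nat * ty) }.

Record fundef := FunDef { fparams : seq nat; fbody : stmt }.

(* component: name (label), provided interfaces, required interfaces (a list: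
   each entry is one required-interface occurrence), and code: entries
   (interface name, function name, implementation). *)
Record component := Comp {
  cname : nat; cprov : seq nat; creq : seq nat;
  ccode : seq (nat * nat * fundef) }.

(* Component wiring tree: a vertex is (a copy of) a component, given by its
   label; its children are listed in the order of the required-interface
   occurrences of that component, each arc labelled by the interface the
   child implements. *)
Inductive wtree : Type := WNode of nat & seq (nat * wtree).

Definition main_fn : nat := 0.

Definition find_iface (L : seq iface) (n : nat) : option iface :=
  ohead [seq I <- L | iname I == n].
Definition find_comp (L : seq component) (n : nat) : option component :=
  ohead [seq C <- L | cname C == n].
(* code of function [f] of interface [I] in component [C] (reduced copy:
   only the code of interface [I] is considered) *)
Definition find_code (C : component) (I f : nat) : option fundef :=
  ohead [seq e.2 | e <- ccode C & (e.1.1 == I) && (e.1.2 == f)].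
Definition find_main (C : component) : option fundef :=
  ohead [seq e.2 | e <- ccode C & (e.1.2 == main_fn) && (e.1.1 \in cprov C)].

(* 3. Operational semantics (fuel-indexed, deterministic)                 *)

Fixpoint val_eqb (v w : val) : bool :=
  match v, w with
  | VNat a, VNat b => a == b
  | VBool a, VBool b => a == b
  | VArr l, VArr m =>
      (fix go (l m : seq val) : bool :=
         match l, m with
         | [::], [::] => true
         | x :: l', y :: m' => val_eqb x y && go l' m'
         | _, _ => false
         end) l m
  | _, _ => false
  end.

Definition binop_sem (op : binop) (v1 v2 : val) : option val :=
  match op, v1, v2 with
  | BAdd, VNat a, VNat b => Some (VNat (a + b))
  | BSub, VNat a, VNat b => Some (VNat (a - b))
  | BMul, VNat a, VNat b => Some (VNat (a * b))
  | BDiv, VNat a, VNat b => Some (VNat (a %/ b))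
  | BMod, VNat a, VNat b => Some (VNat (a %% b))
  | BEq, _, _ => Some (VBool (val_eqb v1 v2))
  | BLt, VNat a, VNat b => Some (VBool (a < b))
  | BAnd, VBool a, VBool b => Some (VBool (a && b))
  | BOr, VBool a, VBool b => Some (VBool (a || b))
  | _, _, _ => None
  end.

Definition default_val (t : ty) : val :=
  match t with
  | TInt => VNat 0 | TBool => VBool false | TArr _ => VArr [::] | TVoid => VNat 0
  end.

(* results: normal value, the run has produced its output (halted), runtime
   error, out of fuel *)
Inductive res (A : Type) : Type :=
| ROk of A
| RHalt of val
| RErr
| RFuel.
Arguments ROk {A}.
Arguments RHalt {A}.
Arguments RErr {A}.
Arguments RFuel {A}.

Definition rbind {A B : Type} (r : res A) (f : A -> res B) : res B :=
  match r with
  | ROk a => f a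
  | RHalt v => RHalt v
  | RErr => RErr
  | RFuel => RFuel
  end.

Definition ropt {A : Type} (o : option A) : res A :=
  if o is Some a then ROk a else RErr.

Inductive outcome : Type := ONormal | OReturn of val.

Definition locals := seq (nat * val).
(* transfer-field store: (path of the arc in the wiring tree, field) |-> value *)
Definition fstore := seq ((seq nat * nat) * val).

Definition lookup_loc (l : locals) (x : nat) : option val :=
  ohead [seq p.2 | p <- l & p.1 == x].
Definition lookup_fs (s : fstore) (k : seq nat * nat) : option val :=
  ohead [seq p.2 | p <- s & p.1 == k].

Record senv := SEnv { sint : seq iface; scomp : seq component; sinp : seq bool }.

Definition field_ty (E : senv) (cn k x : nat) : option ty :=
  match find_comp (scomp E) cn with
  | None => None
  | Some C =>
    if k < size (creq C) then
      match find_iface (sint E) (nth 0 (creq C) k) with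
      | None => None
      | Some Ii => ohead [seq p.2 | p <- ifields Ii & p.1 == x]
      end
    else None
  end.

Fixpoint eval (n : nat) (E : senv) (nd : wtree) (p : seq nat)
    (loc : locals) (fs : fstore) (e : expr) {struct n} : res (val * fstore) :=
  match n with
  | 0 => RFuel
  | n'.+1 =>
    match e with
    | EConst v => ROk (v, fs)
    | EVar x => rbind (ropt (lookup_loc loc x)) (fun v => ROk (v, fs))
    | EInput j =>
        if j < size (sinp E) then ROk (VBool (nth false (sinp E) j), fs) else RErr
    | EBin op e1 e2 =>
        rbind (eval n' E nd p loc fs e1) (fun r1 =>
        rbind (eval n' E nd p loc r1.2 e2) (fun r2 =>
        rbind (ropt (binop_sem op r1.1 r2.1)) (fun v => ROk (v, r2.2))))
    | ENot e1 =>
        rbind (eval n' E nd p loc fs e1) (fun r1 =>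
          if r1.1 is VBool b then ROk (VBool (~~ b), r1.2) else RErr)
    | ENewArr e1 =>
        rbind (eval n' E nd p loc fs e1) (fun r1 =>
          if r1.1 is VNat m then ROk (VArr (nseq m (VNat 0)), r1.2) else RErr)
    | ELen e1 =>
        rbind (eval n' E nd p loc fs e1) (fun r1 =>
          if r1.1 is VArr l then ROk (VNat (size l), r1.2) else RErr)
    | EIndex e1 e2 =>
        rbind (eval n' E nd p loc fs e1) (fun r1 =>
        rbind (eval n' E nd p loc r1.2 e2) (fun r2 =>
          match r1.1, r2.1 with
          | VArr l, VNat i => if i < size l then ROk (nth (VNat 0) l i, r2.2) else RErr
          | _, _ => RErr
          end))
    | ECall k f args =>
        let fix evargs (l : seq expr) (fs0 : fstore) : res (seq val * fstore) :=
          match l with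
          | [::] => ROk ([::], fs0)
          | a :: l' =>
              rbind (eval n' E nd p loc fs0 a) (fun r =>
              rbind (evargs l' r.2) (fun rs => ROk (r.1 :: rs.1, rs.2)))
          end in
        rbind (evargs args fs) (fun rs =>
          let: WNode _ kids := nd in
          if k < size kids then
            let: (Ilab, child) := nth (0, WNode 0 [::]) kids k in
            let: WNode cn' _ := child in
            rbind (ropt (find_comp (scomp E) cn')) (fun C' =>
            rbind (ropt (find_code C' Ilab f)) (fun fd =>
              if size (fparams fd) == size rs.1 then
                rbind (exec n' E child (rcons p k) (zip (fparams fd) rs.1) rs.2 (fbody fd))
                  (fun r => match r.1.1 with
                            | OReturn v => ROk (v, r.2)
                            | ONormal => ROk (VNat 0, r.2)
                            end)
              else RErr))
          else RErr)
    | EField k x =>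
        let: WNode cn _ := nd in
        rbind (ropt (field_ty E cn k x)) (fun t =>
          match lookup_fs fs (rcons p k, x) with
          | Some v => ROk (v, fs)
          | None => ROk (default_val t, fs)
          end)
    end
  end
with exec (n : nat) (E : senv) (nd : wtree) (p : seq nat)
    (loc : locals) (fs : fstore) (s : stmt) {struct n}
    : res (outcome * locals * fstore) :=
  match n with
  | 0 => RFuel
  | n'.+1 =>
    match s with
    | SSkip => ROk (ONormal, loc, fs)
    | SAssign x e => rbind (eval n' E nd p loc fs e) (fun r => ROk (ONormal, (x, r.1) :: loc, r.2))
    | SArrSet x ei ev =>
        rbind (ropt (lookup_loc loc x)) (fun a =>
        rbind (eval n' E nd p loc fs ei) (fun ri =>
        rbind (eval n' E nd p loc ri.2 ev) (fun rv =>
          match a, ri.1 with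
          | VArr l, VNat i =>
              if i < size l then ROk (ONormal, (x, VArr (set_nth (VNat 0) l i rv.1)) :: loc, rv.2)
              else RErr
          | _, _ => RErr
          end)))
    | SSeq s1 s2 =>
        rbind (exec n' E nd p loc fs s1) (fun r =>
          match r.1.1 with
          | ONormal => exec n' E nd p r.1.2 r.2 s2
          | OReturn v => ROk r
          end)
    | SIf c s1 s2 =>
        rbind (eval n' E nd p loc fs c) (fun r =>
          match r.1 with
          | VBool true => exec n' E nd p loc r.2 s1
          | VBool false => exec n' E nd p loc r.2 s2
          | _ => RErr
          end)
    | SWhile c b =>
        rbind (eval n' E nd p loc fs c) (fun r =>
          match r.1 with
          | VBool true =>
              rbind (exec n' E nd p loc r.2 b) (fun rb =>
                match rb.1.1 with
                | ONormal => exec n' E nd p rb.1.2 rb.2 (SWhile c b)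
                | OReturn v => ROk rb
                end)
          | VBool false => ROk (ONormal, loc, r.2)
          | _ => RErr
          end)
    | SReturn e => rbind (eval n' E nd p loc fs e) (fun r => ROk (OReturn r.1, loc, r.2))
    | SOutput e => rbind (eval n' E nd p loc fs e) (fun r => RHalt r.1)
    | SExpr e => rbind (eval n' E nd p loc fs e) (fun r => ROk (ONormal, loc, r.2))
    | SSetField k x e =>
        let: WNode cn _ := nd in
        rbind (ropt (field_ty E cn k x)) (fun _ =>
        rbind (eval n' E nd p loc fs e) (fun r => ROk (ONormal, loc, ((rcons p k, x), r.1) :: r.2)))
    end
  end.

Definition run_system (fuel : nat) (Li : seq iface) (Lc : seq component)
    (i : seq bool) (S : wtree) : option val :=
  let: WNode cn _ := S in
  match find_comp Lc cn with
  | None => None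
  | Some C =>
    match find_main C with
    | None => None
    | Some fd =>
      match exec fuel (SEnv Li Lc i) S [::] [::] [::] (fbody fd) with
      | RHalt v => Some v
      | _ => None
      end
    end
  end.

Definition outputs (Li : seq iface) (Lc : seq component) (S : wtree)
    (i : seq bool) (o : nat) : Prop :=
  exists fuel, run_system fuel Li Lc i S = Some (VNat o).

(* 4. Valid libraries, valid and working systems, reward                  *)

Fixpoint InL {T : Type} (x : T) (s : seq T) : Prop :=
  match s with [::] => False | y :: s' => y = x \/ InL x s' end.

Definition lib_ok (Li : seq iface) (Lc : seq component) : Prop :=
  uniq (map iname Li) /\ uniq (map cname Lc) /\
  forall C, InL C Lc ->
    (forall I, I \in cprov C ++ creq C -> exists Ii, find_iface Li I = Some Ii) /\
    (forall I Ii, I \in cprov C -> find_iface Li I = Some Ii ->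
       forall pr, InL pr (iprotos Ii) ->
         exists fd, find_code C I (pname pr) = Some fd /\
                    size (fparams fd) = size (pparams pr)).

Definition root_label (t : wtree) : nat := let: WNode cn _ := t in cn.

(* [valid_tree Lc anc t]: t is a valid wiring subtree whose root is not
   labelled by any label in [anc] (the labels on the path from the root). *)
Fixpoint valid_tree (Lc : seq component) (anc : seq nat) (t : wtree) : Prop :=
  let: WNode cn kids := t in
  cn \notin anc /\
  exists C, find_comp Lc cn = Some C /\
  (fix allk (ks : seq (nat * wtree)) (rs : seq nat) : Prop :=
     match ks, rs with
     | [::], [::] => True
     | (Ilab, t') :: ks', r :: rs' =>
         Ilab = r /\
         (exists C', find_comp Lc (root_label t') = Some C' /\ Ilab \in cprov C') /\
         valid_tree Lc (cn :: anc) t' /\ allk ks' rs'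
     | _, _ => False
     end) kids (creq C).

Definition based_on (Lc : seq component) (c : nat) (S : wtree) : Prop :=
  root_label S = c /\ valid_tree Lc [::] S.

Definition working (R : seq (seq bool * nat)) (Li : seq iface)
    (Lc : seq component) (S : wtree) : Prop :=
  forall i o, (i, o) \in R -> outputs Li Lc S i o.

Fixpoint ncomp (t : wtree) : nat :=
  let: WNode _ kids := t in
  (fix go (ks : seq (nat * wtree)) : nat :=
     match ks with [::] => 0 | (_, t') :: ks' => ncomp t' + go ks' end) kids + 1.

Definition Rew_ncomp {EnvT : Type} (Env : wtree -> EnvT) (S : wtree) : nat := ncomp S.

(* 5. The problem ESAdapt under Rew_#comp                                 *)

(* An instance: number of variables |X|, requirements R, L_int, L_comp,
   the label of the base component c, the current system S. *)
Record instance := Inst {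
  inv : nat;
  ireq : seq (seq bool * nat);
  iint : seq iface;
  icomp : seq component;
  ibase : nat;
  isys : wtree }.

Definition valid_instance (I : instance) : Prop :=
  lib_ok (iint I) (icomp I) /\
  (forall i o, (i, o) \in ireq I -> size i = inv I) /\
  (exists C, find_comp (icomp I) (ibase I) = Some C /\ exists fd, find_main C = Some fd) /\
  based_on (icomp I) (ibase I) (isys I) /\
  working (ireq I) (iint I) (icomp I) (isys I).

Definition ESAdapt_sol {EnvT : Type} (Env : wtree -> EnvT) (I : instance) (S' : wtree) : Prop :=
  based_on (icomp I) (ibase I) S' /\ working (ireq I) (iint I) (icomp I) S' /\
  forall S'', based_on (icomp I) (ibase I) S'' -> working (ireq I) (iint I) (icomp I) S'' ->
    Rew_ncomp Env S' <= Rew_ncomp Env S''.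

(* 6. Algorithms and encodings                                            *)

(* Algorithms are programs of the (Turing-complete) language above: the
   input is in variable 0; the program's answer is the value it outputs. *)
Definition run_alg (fuel : nat) (A : stmt) (x : val) : option val :=
  match exec fuel (SEnv [::] [::] [::]) (WNode 0 [::]) [::] [:: (0, x)] [::] A with
  | RHalt v => Some v
  | _ => None
  end.

Definition tag (k : nat) (l : seq val) : val := VArr (VNat k :: l).
Definition enc_nat (n : nat) : val := VNat n.
Definition enc_bool (b : bool) : val := VBool b.
Definition enc_seq {T : Type} (f : T -> val) (s : seq T) : val := VArr (map f s).

Fixpoint enc_val (v : val) : val :=
  match v with
  | VNat n => tag 0 [:: VNat n]
  | VBool b => tag 1 [:: VBool b]
  | VArr l => tag 2 [:: VArr (map enc_val l)]
  end.

Fixpoint enc_ty (t : ty) : val :=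
  match t with
  | TInt => tag 0 [::] | TBool => tag 1 [::] | TArr t' => tag 2 [:: enc_ty t'] | TVoid => tag 3 [::]
  end.

Definition enc_binop (o : binop) : val :=
  VNat (match o with BAdd => 0 | BSub => 1 | BMul => 2 | BDiv => 3 | BMod => 4
                   | BEq => 5 | BLt => 6 | BAnd => 7 | BOr => 8 end).

Fixpoint enc_expr (e : expr) : val :=
  match e with
  | EConst v => tag 0 [:: enc_val v]
  | EVar x => tag 1 [:: VNat x]
  | EInput j => tag 2 [:: VNat j]
  | EBin o e1 e2 => tag 3 [:: enc_binop o; enc_expr e1; enc_expr e2]
  | ENot e1 => tag 4 [:: enc_expr e1]
  | ENewArr e1 => tag 5 [:: enc_expr e1]
  | ELen e1 => tag 6 [:: enc_expr e1]
  | EIndex e1 e2 => tag 7 [:: enc_expr e1; enc_expr e2]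
  | ECall k f args => tag 8 [:: VNat k; VNat f; VArr (map enc_expr args)]
  | EField k x => tag 9 [:: VNat k; VNat x]
  end.

Fixpoint enc_stmt (s : stmt) : val :=
  match s with
  | SSkip => tag 0 [::]
  | SAssign x e => tag 1 [:: VNat x; enc_expr e]
  | SArrSet x e1 e2 => tag 2 [:: VNat x; enc_expr e1; enc_expr e2]
  | SSeq s1 s2 => tag 3 [:: enc_stmt s1; enc_stmt s2]
  | SIf c s1 s2 => tag 4 [:: enc_expr c; enc_stmt s1; enc_stmt s2]
  | SWhile c b => tag 5 [:: enc_expr c; enc_stmt b]
  | SReturn e => tag 6 [:: enc_expr e]
  | SOutput e => tag 7 [:: enc_expr e]
  | SExpr e => tag 8 [:: enc_expr e]
  | SSetField k x e => tag 9 [:: VNat k; VNat x; enc_expr e]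
  end.

Definition enc_proto (p : proto) : val :=
  VArr [:: VNat (pname p); enc_ty (pret p); enc_seq enc_ty (pparams p)].
Definition enc_iface (I : iface) : val :=
  VArr [:: VNat (iname I); enc_seq enc_proto (iprotos I);
           enc_seq (fun q => VArr [:: VNat q.1; enc_ty q.2]) (ifields I)].
Definition enc_fundef (f : fundef) : val :=
  VArr [:: enc_seq enc_nat (fparams f); enc_stmt (fbody f)].
Definition enc_component (C : component) : val :=
  VArr [:: VNat (cname C); enc_seq enc_nat (cprov C); enc_seq enc_nat (creq C);
           enc_seq (fun q => VArr [:: VNat q.1.1; VNat q.1.2; enc_fundef q.2]) (ccode C)].

Fixpoint enc_wtree (t : wtree) : val :=
  let: WNode cn kids := t in
  VArr [:: VNat cn; VArr (map (fun q => VArr [:: VNat q.1; enc_wtree q.2]) kids)].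

Fixpoint dec_wtree (v : val) : option wtree :=
  match v with
  | VArr [:: VNat cn; VArr ks] =>
      let fix go (ks : seq val) : option (seq (nat * wtree)) :=
        match ks with
        | [::] => Some [::]
        | VArr [:: VNat Ilab; w] :: ks' =>
            match dec_wtree w, go ks' with
            | Some t, Some r => Some ((Ilab, t) :: r)
            | _, _ => None
            end
        | _ => None
        end in
      omap (WNode cn) (go ks)
  | _ => None
  end.

Definition enc_instance (I : instance) : val :=
  VArr [:: VNat (inv I);
           enc_seq (fun q => VArr [:: enc_seq enc_bool q.1; VNat q.2]) (ireq I);
           enc_seq enc_iface (iint I);
           enc_seq enc_component (icomp I);
           VNat (ibase I);
           enc_wtree (isys I)].

Definition solves_ESAdapt {EnvT : Type} (Env : wtree -> EnvT) (A : stmt) : Prop :=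
  forall I, valid_instance I ->
    exists fuel v S', run_alg fuel A (enc_instance I) = Some v /\
                      dec_wtree v = Some S' /\ ESAdapt_sol Env I S'.

From mathcomp Require Import all_boot zify.

Set Implicit Arguments. Unset Strict Implicit. Unset Printing Implicit Defensive.

(* Diagonalization.  Given an algorithm [A], build libraries in which the base
   component calls a component [diag_comp A] that recomputes the encoding of
   the very instance [diag_instance A] (a quine: its code carries the tokens of
   the rest of its own code) and runs [A] on it as the subcomponent
   [alg_comp A].  If [A] answers the three-component system [diag_sys] through
   [diag_comp A], that component loops, so [diag_sys] does not work; otherwise
   it returns and [diag_sys] works.  The only other valid system is a chain of
   four components, which always works.  Either way the answer of [A] is not a
   working system with the fewest components. *)

(** * Fuel monotonicity and determinism *)

Definition eval_args (n : nat) (E : senv) (nd : wtree) (p : seq nat) (loc : locals) :=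
  fix go (l : seq expr) (fs0 : fstore) : res (seq val * fstore) :=
  match l with
  | [::] => ROk ([::], fs0)
  | a :: l' => rbind (eval n E nd p loc fs0 a) (fun r =>
              rbind (go l' r.2) (fun rs => ROk (r.1 :: rs.1, rs.2)))
  end.

Definition call_result (n : nat) (E : senv) (nd : wtree) (p : seq nat) (k f : nat)
    (rs : seq val * fstore) : res (val * fstore) :=
  let: WNode _ kids := nd in
  if k < size kids then
    let: (Ilab, child) := nth (0, WNode 0 [::]) kids k in
    let: WNode cn' _ := child in
    rbind (ropt (find_comp (scomp E) cn')) (fun C' =>
    rbind (ropt (find_code C' Ilab f)) (fun fd =>
      if size (fparams fd) == size rs.1 then
        rbind (exec n E child (rcons p k) (zip (fparams fd) rs.1) rs.2 (fbody fd))
          (fun r => match r.1.1 with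
                    | OReturn v => ROk (v, r.2)
                    | ONormal => ROk (VNat 0, r.2)
                    end)
      else RErr))
  else RErr.

Lemma eval_call n E nd p loc fs k f args :
  eval n.+1 E nd p loc fs (ECall k f args) =
  rbind (eval_args n E nd p loc args fs) (call_result n E nd p k f).
Proof. by []. Qed.

Definition res_extends {A} (r' r : res A) := r <> RFuel -> r' = r.

Lemma res_extends_refl A (r : res A) : res_extends r r.
Proof. by []. Qed.

Lemma rbind_extends A B (r r' : res A) (f f' : A -> res B) :
  res_extends r' r -> (forall a, res_extends (f' a) (f a)) ->
  res_extends (rbind r' f') (rbind r f).
Proof. by case: r => [a|v||] Hr Hf Hn //=; rewrite Hr //; apply: Hf. Qed.

Ltac extends_step IHe IHx :=
  match goal with
  | |- res_extends ?r ?r => apply: res_extends_refl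
  | |- res_extends (rbind _ _) (rbind _ _) => apply: rbind_extends; [ | intros ? ]
  | |- res_extends (eval _ _ _ _ _ _ _) _ => apply: IHe
  | |- res_extends (exec _ _ _ _ _ _ _) _ => apply: IHx
  | |- res_extends (match ?x with _ => _ end) _ => destruct x
  | |- res_extends (if ?b then _ else _) _ => destruct b
  end.

Lemma eval_exec_extends n m : n <= m ->
  (forall E nd p loc fs e, res_extends (eval m E nd p loc fs e) (eval n E nd p loc fs e)) /\
  (forall E nd p loc fs s, res_extends (exec m E nd p loc fs s) (exec n E nd p loc fs s)).
Proof.
elim: n m => [|n IH] m Hm; first by split=> * [].
case: m Hm => // m Hm.
have [IHe IHx] := IH m Hm.
have IHa E nd p loc args fs :
    res_extends (eval_args m E nd p loc args fs) (eval_args n E nd p loc args fs).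
  elim: args fs => [|a l IHl] fs /=; first exact: res_extends_refl.
  apply: rbind_extends => // r; apply: rbind_extends => // rs; exact: res_extends_refl.
split=> E nd p loc fs [].
all: try (intros; rewrite !eval_call; apply: rbind_extends; [exact: IHa | intros ?; rewrite /call_result]).
all: intros; simpl; repeat extends_step IHe IHx.
Qed.

Lemma eval_mono n m E nd p loc fs e r : n <= m -> eval n E nd p loc fs e = r -> r <> RFuel ->
  eval m E nd p loc fs e = r.
Proof. by move=> /eval_exec_extends[He _] <- Hr; apply: He. Qed.

Lemma exec_mono n m E nd p loc fs s r : n <= m -> exec n E nd p loc fs s = r -> r <> RFuel ->
  exec m E nd p loc fs s = r.
Proof. by move=> /eval_exec_extends[_ He] <- Hr; apply: He. Qed.

Lemma eval_fuel_det n m E nd p loc fs e r1 r2 :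
  eval n E nd p loc fs e = r1 -> eval m E nd p loc fs e = r2 ->
  r1 <> RFuel -> r2 <> RFuel -> r1 = r2.
Proof.
move=> H1 H2 N1 N2.
rewrite -(eval_mono (leq_maxl n m) H1 N1).
by rewrite -(eval_mono (leq_maxr n m) H2 N2).
Qed.

Lemma exec_fuel_det n m E nd p loc fs s r1 r2 :
  exec n E nd p loc fs s = r1 -> exec m E nd p loc fs s = r2 ->
  r1 <> RFuel -> r2 <> RFuel -> r1 = r2.
Proof.
move=> H1 H2 N1 N2.
rewrite -(exec_mono (leq_maxl n m) H1 N1).
by rewrite -(exec_mono (leq_maxr n m) H2 N2).
Qed.

(** * A total-correctness program logic *)

Fixpoint peval (loc : locals) (e : expr) : option val :=
  match e with
  | EConst v => Some v
  | EVar x => lookup_loc loc x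
  | EBin op e1 e2 => match peval loc e1, peval loc e2 with
                     | Some v1, Some v2 => binop_sem op v1 v2 | _, _ => None end
  | ENot e1 => if peval loc e1 is Some (VBool b) then Some (VBool (~~ b)) else None
  | ENewArr e1 => if peval loc e1 is Some (VNat m) then Some (VArr (nseq m (VNat 0))) else None
  | ELen e1 => if peval loc e1 is Some (VArr l) then Some (VNat (size l)) else None
  | EIndex e1 e2 => match peval loc e1, peval loc e2 with
                    | Some (VArr l), Some (VNat i) =>
                        if i < size l then Some (nth (VNat 0) l i) else None
                    | _, _ => None end
  | _ => None
  end.

Fixpoint vars (e : expr) : seq nat :=
  match e with
  | EVar x => [:: x]
  | EBin _ a b | EIndex a b => vars a ++ vars b
  | ENot a | ENewArr a | ELen a => vars a
  | _ => [::]
  end.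

Fixpoint assigned (s : stmt) : seq nat :=
  match s with
  | SAssign x _ | SArrSet x _ _ => [:: x]
  | SSeq a b | SIf _ a b => assigned a ++ assigned b
  | SWhile _ b => assigned b
  | _ => [::]
  end.

Lemma lookup_cons x w loc y :
  lookup_loc ((x, w) :: loc) y = if x == y then Some w else lookup_loc loc y.
Proof. by rewrite /lookup_loc /=; case: (x == y). Qed.

Lemma lookup_cat_notin ws loc y :
  all (fun q => q.1 != y) ws -> lookup_loc (ws ++ loc) y = lookup_loc loc y.
Proof.
elim: ws => //= [[x w] ws IH] /andP [/negbTE Hx H].
by rewrite lookup_cons Hx IH.
Qed.

Arguments lookup_loc : simpl never.

Lemma peval_ext l1 l2 e : {in vars e, forall y, lookup_loc l1 y = lookup_loc l2 y} ->
  peval l1 e = peval l2 e.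
Proof.
elim: e => //= [y|op a IHa b IHb|a IHa|a IHa|a IHa|a IHa b IHb] H.
all: rewrite ?IHa ?IHb ?H ?inE // => y Hy; apply: H; by rewrite ?mem_cat Hy ?orbT.
Qed.

Lemma peval_cons x w loc e : x \notin vars e -> peval ((x, w) :: loc) e = peval loc e.
Proof.
move=> Hx; apply: peval_ext => y Hy.
by rewrite lookup_cons; case: eqP => // Exy; rewrite Exy Hy in Hx.
Qed.

Lemma exec_locals_frame n E nd p loc fs s o loc' fs' :
  exec n E nd p loc fs s = ROk (o, loc', fs') ->
  exists2 ws, loc' = ws ++ loc & all (fun q => q.1 \in assigned s) ws.
Proof.
have sub_l (ws : locals) a b : all (fun q => q.1 \in a) ws -> all (fun q => q.1 \in a ++ b) ws.
  by apply: sub_all => q; rewrite mem_cat => ->.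
have sub_r (ws : locals) a b : all (fun q => q.1 \in b) ws -> all (fun q => q.1 \in a ++ b) ws.
  by apply: sub_all => q; rewrite mem_cat => ->; rewrite orbT.
elim: n loc fs s o loc' fs' => [|n IH] loc fs s o loc' fs' //=.
case: s => /=.
- by case=> _ <- _; exists [::].
- move=> x e; case: (eval n E nd p loc fs e) => [[w f1]| | |] //= [_ <- _].
  by exists [:: (x, w)]; rewrite //= inE eqxx.
- move=> x ei ev; case: (lookup_loc loc x) => [a|] //=.
  case: (eval n E nd p loc fs ei) => [[vi f1]| | |] //=.
  case: (eval n E nd p loc f1 ev) => [[vv f2]| | |] //=.
  case: a => // l; case: vi => // i; case: ifP => // _ [_ <- _].
  by eexists [:: (x, _)]; rewrite //= inE eqxx.
- move=> s1 s2; case E1: (exec n E nd p loc fs s1) => [[[o1 l1] f1]| | |] //=.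
  have [ws1 -> H1] := IH _ _ _ _ _ _ E1.
  case: o1 E1 => [|w] E1 /=; last by case=> _ <- _; exists ws1 => //; apply: sub_l.
  move=> /IH [ws2 -> H2]; exists (ws2 ++ ws1); first by rewrite catA.
  by rewrite all_cat sub_r ?sub_l.
- move=> c s1 s2; case: (eval n E nd p loc fs c) => [[w f1]| | |] //=.
  case: w => // -[] /IH [ws -> H]; exists ws => //; [exact: sub_l | exact: sub_r].
- move=> c b; case: (eval n E nd p loc fs c) => [[w f1]| | |] //=.
  case: w => // -[]; last by case=> _ <- _; exists [::].
  case E1: (exec n E nd p loc f1 b) => [[[o1 l1] f2]| | |] //=.
  have [ws1 -> H1] := IH _ _ _ _ _ _ E1.
  case: o1 E1 => [|w] E1 /=; last by case=> _ <- _; exists ws1.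
  by move=> /IH [ws2 -> H2]; exists (ws2 ++ ws1); rewrite ?catA // all_cat H1 H2.
- by move=> e; case: (eval n E nd p loc fs e) => [[w f1]| | |] //= [_ <- _]; exists [::].
- by move=> e; case: (eval n E nd p loc fs e) => [[w f1]| | |].
- by move=> e; case: (eval n E nd p loc fs e) => [[w f1]| | |] //= [_ <- _]; exists [::].
- move=> k x e; case Hnd: nd => [cn kids]; case: (field_ty E cn k x) => //= t.
  by rewrite -Hnd; case: (eval n E nd p loc fs e) => [[w f1]| | |] //= [_ <- _]; exists [::].
Qed.

Section ProgramLogic.

Variables (E : senv) (nd : wtree) (p : seq nat) (fs : fstore).

Lemma peval_eval loc e w : peval loc e = Some w ->
  exists n, eval n E nd p loc fs e = ROk (w, fs).
Proof.
have step n1 n2 e1 e2 r1 r2 : eval n1 E nd p loc fs e1 = ROk r1 ->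
    eval n2 E nd p loc fs e2 = ROk r2 ->
    eval (maxn n1 n2) E nd p loc fs e1 = ROk r1 /\ eval (maxn n1 n2) E nd p loc fs e2 = ROk r2.
  by move=> H1 H2; rewrite (eval_mono (leq_maxl n1 n2) H1) ?(eval_mono (leq_maxr n1 n2) H2).
elim: e w => //= [w' w [<-]|x w Hx|op e1 IH1 e2 IH2 w|e1 IH w|e1 IH w|e1 IH w|e1 IH1 e2 IH2 w].
- by exists 1.
- by exists 1; rewrite /= Hx.
- case E1: (peval loc e1) => [w1|] //; case E2: (peval loc e2) => [w2|] // H.
  have [n1 H1] := IH1 _ E1; have [n2 H2] := IH2 _ E2.
  by have [G1 G2] := step _ _ _ _ _ _ H1 H2; exists (maxn n1 n2).+1; rewrite /= G1 /= G2 /= H.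
- case E1: (peval loc e1) => [[|b|]|] //= [<-].
  by have [n1 H1] := IH _ E1; exists n1.+1; rewrite /= H1.
- case E1: (peval loc e1) => [[m||]|] //= [<-].
  by have [n1 H1] := IH _ E1; exists n1.+1; rewrite /= H1.
- case E1: (peval loc e1) => [[||l]|] //= [<-].
  by have [n1 H1] := IH _ E1; exists n1.+1; rewrite /= H1.
- case E1: (peval loc e1) => [[||l]|] //; case E2: (peval loc e2) => [[i||]|] //.
  case: ifP => // Hi [<-].
  have [n1 H1] := IH1 _ E1; have [n2 H2] := IH2 _ E2.
  by have [G1 G2] := step _ _ _ _ _ _ H1 H2; exists (maxn n1 n2).+1; rewrite /= G1 /= G2 /= Hi.
Qed.

Definition wp (loc : locals) (s : stmt) (P : locals -> Prop) :=
  exists n loc', exec n E nd p loc fs s = ROk (ONormal, loc', fs) /\ P loc'.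

Lemma wp_weaken loc s (P Q : locals -> Prop) :
  wp loc s P -> (forall l, P l -> Q l) -> wp loc s Q.
Proof. by case=> n [l [H HP]] HPQ; exists n, l; split; last apply: HPQ. Qed.

Lemma wp_frame loc s (P : locals -> Prop) : wp loc s P ->
  wp loc s (fun l => P l /\ forall y, y \notin assigned s -> lookup_loc l y = lookup_loc loc y).
Proof.
case=> n [l [H HP]]; exists n, l; split=> //; split=> // y Hy.
have [ws -> Hws] := exec_locals_frame H.
apply: lookup_cat_notin; apply: sub_all Hws => q Hq.
by apply: contraNneq Hy => <-.
Qed.

Lemma wp_skip loc (P : locals -> Prop) : P loc -> wp loc SSkip P.
Proof. by exists 1, loc. Qed.

Lemma wp_assign loc x e w (P : locals -> Prop) :
  peval loc e = Some w -> P ((x, w) :: loc) -> wp loc (SAssign x e) P.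
Proof. by move=> /peval_eval[n Hn] HP; exists n.+1, ((x, w) :: loc); rewrite /= Hn. Qed.

Lemma wp_arrset loc x ei ev l i w (P : locals -> Prop) :
  lookup_loc loc x = Some (VArr l) -> peval loc ei = Some (VNat i) -> i < size l ->
  peval loc ev = Some w ->
  P ((x, VArr (set_nth (VNat 0) l i w)) :: loc) -> wp loc (SArrSet x ei ev) P.
Proof.
move=> Hx /peval_eval[n1 H1] Hil /peval_eval[n2 H2] HP.
exists (maxn n1 n2).+1, ((x, VArr (set_nth (VNat 0) l i w)) :: loc).
by rewrite /= Hx /= (eval_mono (leq_maxl n1 n2) H1) //= (eval_mono (leq_maxr n1 n2) H2) //= Hil.
Qed.

Lemma wp_seq loc s1 s2 (P : locals -> Prop) :
  wp loc s1 (fun l1 => wp l1 s2 P) -> wp loc (SSeq s1 s2) P.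
Proof.
case=> n1 [l1 [H1 [n2 [l2 [H2 HP]]]]].
exists (maxn n1 n2).+1, l2; split=> //=.
rewrite (exec_mono (leq_maxl n1 n2) H1) //=.
exact: (exec_mono (leq_maxr n1 n2) H2).
Qed.

Lemma wp_if loc c b s1 s2 (P : locals -> Prop) :
  peval loc c = Some (VBool b) -> wp loc (if b then s1 else s2) P -> wp loc (SIf c s1 s2) P.
Proof.
move=> /peval_eval[n1 H1] [n2 [l2 [H2 HP]]].
exists (maxn n1 n2).+1, l2; split=> //=.
rewrite (eval_mono (leq_maxl n1 n2) H1) //=.
by case: b {H1} H2 => H2; exact: (exec_mono (leq_maxr n1 n2) H2).
Qed.

Lemma wp_while_true loc c b (P : locals -> Prop) :
  peval loc c = Some (VBool true) ->
  wp loc b (fun l1 => wp l1 (SWhile c b) P) -> wp loc (SWhile c b) P.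
Proof.
move=> /peval_eval[n1 H1] [n2 [l1 [H2 [n3 [l3 [H3 HP]]]]]].
exists (maxn n1 (maxn n2 n3)).+1, l3; split=> //=.
rewrite (eval_mono (leq_maxl _ _) H1) //=.
rewrite (exec_mono (leq_trans (leq_maxl n2 n3) (leq_maxr _ _)) H2) //=.
exact: (exec_mono (leq_trans (leq_maxr n2 n3) (leq_maxr _ _)) H3).
Qed.

Lemma wp_while_false loc c b (P : locals -> Prop) :
  peval loc c = Some (VBool false) -> P loc -> wp loc (SWhile c b) P.
Proof. by move=> /peval_eval[n1 H1] HP; exists n1.+1, loc; rewrite /= H1. Qed.

Definition diverges (loc : locals) (s : stmt) := forall n, exec n E nd p loc fs s = RFuel.

Lemma diverges_seq loc s1 s2 :
  wp loc s1 (fun l => diverges l s2) -> diverges loc (SSeq s1 s2).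
Proof.
case=> n1 [l1 [H1 HD]] [|n] //=.
case E1: (exec n E nd p loc fs s1) => [r| | |] //=;
  have := exec_fuel_det E1 H1 ltac:(by []) ltac:(by []) => // -[->].
exact: HD.
Qed.

Lemma diverges_if loc c s1 s2 :
  peval loc c = Some (VBool true) -> diverges loc s1 -> diverges loc (SIf c s1 s2).
Proof.
move=> /peval_eval[n1 H1] HD [|n] //=.
case E1: (eval n E nd p loc fs c) => [r| | |] //=;
  have := eval_fuel_det E1 H1 ltac:(by []) ltac:(by []) => // -[->].
exact: HD.
Qed.

End ProgramLogic.

(** * Running an algorithm as the code of a component *)

Definition loop_forever : stmt := SWhile (EConst (VBool true)) SSkip.

Lemma loop_forever_diverges n E nd p loc fs : exec n E nd p loc fs loop_forever = RFuel.
Proof.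
suff: exec n E nd p loc fs loop_forever = RFuel /\
      exec n.+1 E nd p loc fs loop_forever = RFuel by case.
by elim: n => [|n [IH1 IH2]].
Qed.

(* The algorithm's answer is what it outputs; as the code of a function it
   must return it instead.  A top-level [return] of the algorithm yields no
   answer, so it becomes divergence. *)
Fixpoint callee_body (s : stmt) : stmt :=
  match s with
  | SSeq a b => SSeq (callee_body a) (callee_body b)
  | SIf c a b => SIf c (callee_body a) (callee_body b)
  | SWhile c b => SWhile c (callee_body b)
  | SOutput e => SReturn e
  | SReturn e => loop_forever
  | s => s
  end.

Definition fieldless (E : senv) (cn : nat) := forall k x, field_ty E cn k x = None.

(* An error of the algorithm may become divergence of its callee version,
   since [return e] with an erroneous [e] becomes [loop_forever]. *)
Definition sim_eval {A} (r r' : res (A * fstore)) (fs fs' : fstore) :=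
  match r with
  | ROk (w, f1) => f1 = fs /\ r' = ROk (w, fs')
  | RHalt _ => False
  | RErr => r' = RErr \/ r' = RFuel
  | RFuel => r' = RFuel
  end.

Definition sim_exec (r r' : res (outcome * locals * fstore)) (fs fs' : fstore) :=
  match r with
  | ROk (ONormal, l, f1) => f1 = fs /\ r' = ROk (ONormal, l, fs')
  | ROk (OReturn _, _, _) => r' = RFuel
  | RHalt w => exists l, r' = ROk (OReturn w, l, fs')
  | RErr => r' = RErr \/ r' = RFuel
  | RFuel => r' = RFuel
  end.
Arguments sim_eval : simpl never.
Arguments sim_exec : simpl never.

Lemma sim_eval_bind A B (r r' : res (A * fstore)) (f : A * fstore -> res (B * fstore)) f' fs fs' :
  sim_eval r r' fs fs' -> (forall a, sim_eval (f (a, fs)) (f' (a, fs')) fs fs') ->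
  sim_eval (rbind r f) (rbind r' f') fs fs'.
Proof.
rewrite /sim_eval; case: r => [[a f1]|w||] /=.
- by case=> -> -> H; apply: H.
- by [].
- by case=> ->; [left | right].
- by move=> ->.
Qed.

Lemma sim_exec_bind_eval A (r r' : res (A * fstore)) f f' fs fs' :
  sim_eval r r' fs fs' -> (forall a, sim_exec (f (a, fs)) (f' (a, fs')) fs fs') ->
  sim_exec (rbind r f) (rbind r' f') fs fs'.
Proof.
rewrite /sim_eval /sim_exec; case: r => [[a f1]|w||] /=.
- by case=> -> -> H; apply: H.
- by [].
- by case=> ->; [left | right].
- by move=> ->.
Qed.

Lemma sim_exec_bind r r' g g' fs fs' :
  sim_exec r r' fs fs' ->
  (forall l, sim_exec (g (ONormal, l, fs)) (g' (ONormal, l, fs')) fs fs') ->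
  (forall w l f, g (OReturn w, l, f) = ROk (OReturn w, l, f)) ->
  (forall w l f, g' (OReturn w, l, f) = ROk (OReturn w, l, f)) ->
  sim_exec (rbind r g) (rbind r' g') fs fs'.
Proof.
move=> H Hn Hg Hg'; move: H; rewrite /sim_exec.
case: r => [[[[|w] l] f1]|w||] /=.
- by case=> -> ->; apply: Hn.
- by move=> ->; rewrite Hg.
- by case=> l ->; rewrite /= Hg'; exists l.
- by case=> ->; auto.
- by move=> ->.
Qed.

Ltac sim_eval_tac IHe IHa :=
  repeat (simpl; match goal with
  | |- sim_eval (rbind (eval _ _ _ _ _ _ _) _) (rbind _ _) _ _ =>
        apply: sim_eval_bind; [apply: IHe | intros ?]
  | |- sim_eval (rbind (eval_args _ _ _ _ _ _ _) _) (rbind _ _) _ _ =>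
        apply: sim_eval_bind; [apply: IHa | intros ?]
  | |- sim_eval (rbind (ropt ?o) _) (rbind (ropt ?o) _) _ _ => destruct o
  | |- sim_eval (match ?x with _ => _ end) _ _ _ => destruct x
  | |- sim_eval (if ?b then _ else _) _ _ _ => destruct b
  | |- sim_eval (ROk _) (ROk _) _ _ => by rewrite /sim_eval; split
  | |- sim_eval RErr _ _ _ => by rewrite /sim_eval; left
  end).

Ltac sim_exec_tac IHe IHx :=
  repeat (simpl; match goal with
  | |- sim_exec (rbind (eval _ _ _ _ _ _ _) _) (rbind _ _) _ _ =>
        apply: sim_exec_bind_eval; [apply: IHe | intros ?]
  | |- sim_exec (rbind (exec _ _ _ _ _ _ _) _) (rbind _ _) _ _ =>
        apply: sim_exec_bind; [apply: IHx | intros ? | by [] | by []]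
  | |- sim_exec (exec _ _ _ _ _ _ _) _ _ _ => apply: IHx
  | |- sim_exec (rbind (ropt ?o) _) (rbind (ropt ?o) _) _ _ => destruct o
  | |- sim_exec (match ?x with _ => _ end) _ _ _ => destruct x
  | |- sim_exec (if ?b then _ else _) _ _ _ => destruct b
  | |- sim_exec (ROk _) (ROk _) _ _ => by rewrite /sim_exec; split
  | |- sim_exec RErr _ _ _ => by rewrite /sim_exec; left
  | |- sim_exec (RHalt _) (ROk _) _ _ => by rewrite /sim_exec /=; eexists
  end).

Lemma callee_body_sim n E cn p E' cn' p' :
  fieldless E cn -> fieldless E' cn' -> sinp E = sinp E' ->
  (forall loc fs fs' e, sim_eval (eval n E (WNode cn [::]) p loc fs e)
                                 (eval n E' (WNode cn' [::]) p' loc fs' e) fs fs') /\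
  (forall loc fs fs' s, sim_exec (exec n E (WNode cn [::]) p loc fs s)
                                 (exec n E' (WNode cn' [::]) p' loc fs' (callee_body s)) fs fs').
Proof.
move=> Hf Hf' Hi.
elim: n => [|n [IHe IHx]]; first by split.
have IHa loc args fs fs' : sim_eval (eval_args n E (WNode cn [::]) p loc args fs)
                                    (eval_args n E' (WNode cn' [::]) p' loc args fs') fs fs'.
  elim: args fs fs' => [|a l IHl] fs fs' /=; first by rewrite /sim_eval.
  apply: sim_eval_bind => //= a0.
  by apply: sim_eval_bind => //= [[vs f2]] /=; rewrite /sim_eval.
split=> [loc fs fs' e|loc fs fs' s].
  case: e.
  all: try (intros; rewrite !eval_call; apply: sim_eval_bind; [exact: IHa | intros ?;
            by rewrite /call_result /= /sim_eval; left]).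
  all: try (intros; simpl; rewrite Hf Hf' /=; by rewrite /sim_eval; left).
  all: try (intros; simpl; rewrite Hi).
  all: intros; sim_eval_tac IHe IHa.
case: s.
all: try (intros; simpl; rewrite Hf Hf' /=; by rewrite /sim_exec; left).
all: try (intros e; have -> : callee_body (SReturn e) = loop_forever by [];
  rewrite loop_forever_diverges /=;
  have := IHe loc fs fs e; rewrite /sim_eval /sim_exec;
  case: (eval n E (WNode cn [::]) p loc fs e) => [[a f1]|w||] //=).
all: intros; sim_exec_tac IHe IHx.
all: by right.
Qed.

Lemma run_alg_callee fuel A x w E cn p fs :
  fieldless E cn -> sinp E = [::] -> run_alg fuel A x = Some w ->
  exists l, exec fuel E (WNode cn [::]) p [:: (0, x)] fs (callee_body A) = ROk (OReturn w, l, fs).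
Proof.
move=> Hf Hs; rewrite /run_alg.
have [_ Hsim] := @callee_body_sim fuel (SEnv [::] [::] [::]) 0 [::] E cn p (fun _ _ => erefl) Hf (esym Hs).
have := Hsim [:: (0, x)] [::] fs A; rewrite /sim_exec.
by case: (exec fuel _ _ _ _ _ A) => [[[[|?] ?] ?]|?||] //= H [<-].
Qed.

(** * A decoder for values serialized as token lists *)

(* Postfix serialization: an array is followed by its length, so decoding is
   a stack machine. *)
Fixpoint tokens (w : val) : seq nat :=
  match w with
  | VNat n => [:: 0; n]
  | VBool b => [:: 1; nat_of_bool b]
  | VArr l => flatten (map tokens l) ++ [:: 2; size l]
  end.

Fixpoint stack_val (s : seq val) : val :=
  if s is w :: s' then VArr [:: w; stack_val s'] else VNat 0.

Definition val_nested_ind (P : val -> Prop) (Hn : forall n, P (VNat n))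
    (Hb : forall b, P (VBool b))
    (Ha : forall l, foldr (fun w acc => P w /\ acc) True l -> P (VArr l)) :
  forall w, P w :=
  fix F w := match w with
  | VNat n => Hn n
  | VBool b => Hb b
  | VArr l => Ha l ((fix G l : foldr (fun w acc => P w /\ acc) True l :=
                      match l with [::] => I | w :: l' => conj (F w) (G l') end) l)
  end.

Notation cst n := (EConst (VNat n)).
Notation var x := (EVar x).

(* Registers of the decoder: 1 token array, 11 read position, 12 stack,
   13 and 14 current token pair, 15 array being rebuilt, 16 its fill
   counter, 17 scratch; the result is left in 2. *)
Definition push_prog (e : expr) :=
  SSeq (SAssign 17 (ENewArr (cst 2))) (SSeq (SArrSet 17 (cst 0) e)
    (SSeq (SArrSet 17 (cst 1) (var 12)) (SAssign 12 (var 17)))).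

Definition pop_loop :=
  SWhile (EBin BLt (cst 0) (var 16))
    (SSeq (SAssign 16 (EBin BSub (var 16) (cst 1)))
    (SSeq (SArrSet 15 (var 16) (EIndex (var 12) (cst 0)))
          (SAssign 12 (EIndex (var 12) (cst 1))))).

Definition dispatch :=
  SIf (EBin BEq (var 13) (cst 0)) (push_prog (var 14))
    (SIf (EBin BEq (var 13) (cst 1)) (push_prog (EBin BEq (var 14) (cst 1)))
       (SSeq (SAssign 15 (ENewArr (var 14))) (SSeq (SAssign 16 (var 14))
             (SSeq pop_loop (push_prog (var 15)))))).

Definition decode_step :=
  SSeq (SAssign 13 (EIndex (var 1) (var 11)))
  (SSeq (SAssign 14 (EIndex (var 1) (EBin BAdd (var 11) (cst 1))))
  (SSeq dispatch (SAssign 11 (EBin BAdd (var 11) (cst 2))))).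

Definition decode_loop := SWhile (EBin BLt (var 11) (ELen (var 1))) decode_step.

Definition decode_prog :=
  SSeq (SAssign 11 (cst 0)) (SSeq (SAssign 12 (cst 0))
  (SSeq decode_loop (SAssign 2 (EIndex (var 12) (cst 0))))).

Definition decoder_state (flat : seq nat) i s (loc : locals) :=
  [/\ lookup_loc loc 1 = Some (VArr (map VNat flat)), lookup_loc loc 11 = Some (VNat i)
    & lookup_loc loc 12 = Some (stack_val s)].

Lemma decoder_state_frame flat i s s' loc l :
  decoder_state flat i s loc -> lookup_loc l 12 = Some (stack_val s') ->
  (forall y, y \notin [:: 17; 12] -> lookup_loc l y = lookup_loc loc y) ->
  decoder_state flat i s' l.
Proof. by case=> H1 H11 _ H12 Hf; split=> //; rewrite Hf. Qed.

Lemma set_nth_nseq m (y z : val) t :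
  set_nth (VNat 0) (nseq m (VNat 0) ++ z :: t) m y = nseq m (VNat 0) ++ y :: t.
Proof. by elim: m => //= m ->. Qed.

Lemma nseqS_cat m (x : val) t : nseq m.+1 x ++ t = nseq m x ++ x :: t.
Proof. by elim: m => //= m ->. Qed.

Lemma drop_cons2 (fl : seq nat) i k a r : drop i fl = k :: a :: r ->
  [/\ nth 0 fl i = k, nth 0 fl i.+1 = a & i.+1 < size fl].
Proof.
move=> H; split.
- by have := nth_drop i 0 fl 0; rewrite H addn0.
- by have := nth_drop i 0 fl 1; rewrite H addn1.
- by have := size_drop i fl; rewrite H /= => Hs; rewrite -subn_gt0 subnS -Hs.
Qed.

Lemma drop_add_cat (fl a b : seq nat) i : drop i fl = a ++ b -> drop (i + size a) fl = b.
Proof. by move=> H; rewrite addnC -drop_drop H drop_size_cat. Qed.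

Section Decoder.

Variables (E : senv) (nd : wtree) (p : seq nat) (fs : fstore).
Local Notation wp := (wp E nd p fs).

Lemma wp_push loc e w s (P : locals -> Prop) :
  17 \notin vars e -> lookup_loc loc 12 = Some (stack_val s) -> peval loc e = Some w ->
  (forall l, lookup_loc l 12 = Some (stack_val (w :: s)) ->
     (forall y, y \notin [:: 17; 12] -> lookup_loc l y = lookup_loc loc y) -> P l) ->
  wp loc (push_prog e) P.
Proof.
move=> H17 H12 He HP.
apply: wp_seq; apply: wp_assign => //=.
apply: wp_seq; apply: (@wp_arrset _ _ _ _ _ _ _ _ (nseq 2 (VNat 0)) 0 w) => //.
  by rewrite peval_cons.
apply: wp_seq; apply: (@wp_arrset _ _ _ _ _ _ _ _ [:: w; VNat 0] 1 (stack_val s)) => //.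
apply: wp_assign => //; apply: HP; first by rewrite lookup_cons.
move=> y; rewrite !inE => /norP [/negbTE H1 /negbTE H2].
by rewrite !lookup_cons eq_sym H2 !(eq_sym 17) H1.
Qed.

(* Popping the top [m] stack entries into positions [m-1], ..., [0] of
   register 15 rebuilds the array [l] whose elements were pushed in order. *)
Lemma wp_pop_loop (l s : seq val) m loc (P : locals -> Prop) :
  m <= size l ->
  lookup_loc loc 16 = Some (VNat m) ->
  lookup_loc loc 12 = Some (stack_val (rev (take m l) ++ s)) ->
  lookup_loc loc 15 = Some (VArr (nseq m (VNat 0) ++ drop m l)) ->
  (forall l', lookup_loc l' 12 = Some (stack_val s) -> lookup_loc l' 15 = Some (VArr l) ->
     (forall y, y \notin [:: 16; 15; 12] -> lookup_loc l' y = lookup_loc loc y) -> P l') ->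
  wp loc pop_loop P.
Proof.
elim: m loc => [|m IH] loc Hm H16 H12 H15 HP.
  apply: wp_while_false; first by rewrite /= H16.
  by apply: HP; rewrite ?H12 ?H15 //= ?take0 ?drop0 ?cats0.
apply: wp_while_true; first by rewrite /= H16.
rewrite (take_nth (VNat 0) Hm) rev_rcons /= in H12.
rewrite nseqS_cat in H15.
apply: wp_seq; apply: wp_assign; first by rewrite /= H16 /= subn1.
apply: wp_seq; apply: (@wp_arrset _ _ _ _ _ _ _ _ _ m (nth (VNat 0) l m)).
- by rewrite lookup_cons /= H15.
- by rewrite /= lookup_cons.
- by rewrite size_cat size_nseq /= addnS ltnS leq_addr.
- by rewrite /= lookup_cons /= H12.
apply: wp_assign; first by rewrite /= !lookup_cons /= H12.
rewrite set_nth_nseq.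
apply: IH; rewrite ?lookup_cons -?drop_nth //; first exact: ltnW.
move=> l' H1 H2 H3; apply: HP => // y Hy; rewrite H3 //.
move: Hy; rewrite !inE => /norP [/negbTE N16 /norP [/negbTE N15 /negbTE N12]].
by rewrite !lookup_cons !(eq_sym _ y) N16 N15 N12.
Qed.

Lemma wp_dispatch_nat flat i s a loc :
  lookup_loc loc 13 = Some (VNat 0) -> lookup_loc loc 14 = Some (VNat a) ->
  decoder_state flat i s loc ->
  wp loc dispatch (decoder_state flat i (VNat a :: s)).
Proof.
move=> H13 H14 HS; apply: (@wp_if _ _ _ _ _ _ true); first by rewrite /= H13.
case: (HS) => _ _ H12.
apply: (@wp_push _ _ (VNat a) s) => //.
by move=> l G12 Gf; apply: decoder_state_frame HS G12 Gf.
Qed.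

Lemma wp_dispatch_bool flat i s b loc :
  lookup_loc loc 13 = Some (VNat 1) -> lookup_loc loc 14 = Some (VNat (nat_of_bool b)) ->
  decoder_state flat i s loc ->
  wp loc dispatch (decoder_state flat i (VBool b :: s)).
Proof.
move=> H13 H14 HS; apply: (@wp_if _ _ _ _ _ _ false); first by rewrite /= H13.
apply: (@wp_if _ _ _ _ _ _ true); first by rewrite /= H13.
case: (HS) => _ _ H12.
apply: (@wp_push _ _ (VBool b) s) => //; first by rewrite /= H14; case: b {H14 HS}.
by move=> l G12 Gf; apply: decoder_state_frame HS G12 Gf.
Qed.

Lemma wp_dispatch_arr flat i s (l : seq val) loc :
  lookup_loc loc 13 = Some (VNat 2) -> lookup_loc loc 14 = Some (VNat (size l)) ->
  decoder_state flat i (rev l ++ s) loc ->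
  wp loc dispatch (decoder_state flat i (VArr l :: s)).
Proof.
move=> H13 H14 HS; apply: (@wp_if _ _ _ _ _ _ false); first by rewrite /= H13.
apply: (@wp_if _ _ _ _ _ _ false); first by rewrite /= H13.
case: (HS) => H1 H11 H12.
apply: wp_seq; apply: wp_assign; first by rewrite /= H14.
apply: wp_seq; apply: wp_assign; first by rewrite /= lookup_cons H14.
apply: wp_seq; apply: (@wp_pop_loop l s (size l)) => //.
all: rewrite ?lookup_cons /= ?take_size ?drop_size ?cats0 //.
move=> l' G12 G15 Gf.
apply: (@wp_push _ _ (VArr l) s) => // l2 K12 Kf.
by split=> //; rewrite Kf // Gf // !lookup_cons.
Qed.

Lemma wp_decode_loop_step flat i s s' k a r loc (Q : locals -> Prop) :
  decoder_state flat i s loc -> drop i flat = k :: a :: r ->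
  (forall loc1, lookup_loc loc1 13 = Some (VNat k) -> lookup_loc loc1 14 = Some (VNat a) ->
     decoder_state flat i s loc1 -> wp loc1 dispatch (decoder_state flat i s')) ->
  (forall loc', decoder_state flat (i + 2) s' loc' -> wp loc' decode_loop Q) ->
  wp loc decode_loop Q.
Proof.
move=> [H1 H11 H12] Hd HD HK; have [Hk Ha Hs] := drop_cons2 Hd.
apply: wp_while_true; first by rewrite /= H1 H11 /= size_map ltnW.
apply: wp_seq; apply: wp_assign.
  by rewrite /= H1 H11 /= size_map (ltnW Hs) (nth_map 0) ?Hk // ltnW.
apply: wp_seq; apply: wp_assign.
  by rewrite /= !lookup_cons /= H1 H11 /= size_map addn1 Hs (nth_map 0) ?Ha.
apply: wp_seq; apply: wp_weaken; first apply: HD.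
- by rewrite !lookup_cons.
- by rewrite !lookup_cons.
- by split; rewrite !lookup_cons.
move=> l2 [G1 G11 G12]; apply: wp_assign; first by rewrite /= G11.
by apply: HK; split; rewrite !lookup_cons.
Qed.

Definition decodes_token (flat : seq nat) (w : val) := forall i s rest loc (Q : locals -> Prop),
  drop i flat = tokens w ++ rest -> decoder_state flat i s loc ->
  (forall loc', decoder_state flat (i + size (tokens w)) (w :: s) loc' -> wp loc' decode_loop Q) ->
  wp loc decode_loop Q.

Lemma decodes_tokens_seq flat l : foldr (fun w acc => decodes_token flat w /\ acc) True l ->
  forall i s rest loc (Q : locals -> Prop),
  drop i flat = flatten (map tokens l) ++ rest -> decoder_state flat i s loc ->
  (forall loc', decoder_state flat (i + size (flatten (map tokens l))) (rev l ++ s) loc' ->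
     wp loc' decode_loop Q) ->
  wp loc decode_loop Q.
Proof.
elim: l => [|w l IHl] /= Hl i s rest loc Q Hd HS HK; first by apply: HK; rewrite addn0.
case: Hl => Hw Hl.
apply: (Hw i s (flatten (map tokens l) ++ rest)); [by rewrite Hd catA | exact: HS |].
move=> loc2 HS2; apply: (IHl Hl (i + size (tokens w)) (w :: s) rest) => //.
  by apply: drop_add_cat; rewrite Hd catA.
by move=> loc3 HS3; apply: HK; rewrite size_cat addnA rev_cons cat_rcons.
Qed.

Lemma decodes_all_tokens flat w : decodes_token flat w.
Proof.
elim/val_nested_ind: w => [n|b|l Hl] i s rest loc Q Hd HS HK.
- by apply: (wp_decode_loop_step HS Hd) HK => *; apply: wp_dispatch_nat.
- by apply: (wp_decode_loop_step HS Hd) HK => *; apply: wp_dispatch_bool.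
apply: (@decodes_tokens_seq flat l Hl i s [:: 2, size l & rest] loc Q _ HS).
  by rewrite Hd /= -catA.
move=> loc' HS'; apply: (wp_decode_loop_step (s' := VArr l :: s) HS').
- by apply: drop_add_cat; rewrite Hd /= -catA.
- by move=> *; apply: wp_dispatch_arr.
by move=> loc'' HS''; apply: HK; rewrite /= size_cat addnA.
Qed.

Lemma wp_decode_prog w loc :
  lookup_loc loc 1 = Some (VArr (map VNat (tokens w))) ->
  wp loc decode_prog (fun l => lookup_loc l 2 = Some w /\ lookup_loc l 1 = lookup_loc loc 1).
Proof.
move=> H1.
apply: wp_seq; apply: wp_assign => //.
apply: wp_seq; apply: wp_assign => //.
apply: wp_seq; apply: (@decodes_all_tokens (tokens w) w 0 [::] [::]).
- by rewrite drop0 cats0.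
- by split; rewrite !lookup_cons.
move=> loc' [G1 G11 G12].
apply: wp_while_false; first by rewrite /= G1 G11 /= size_map add0n ltnn.
apply: wp_assign; first by rewrite /= G12.
by split; rewrite !lookup_cons //= G1 H1.
Qed.

End Decoder.

(** * Building arrays and encoding a token array *)

Fixpoint fill_array (x i : nat) (es : seq expr) : stmt :=
  if es is e :: es' then SSeq (SArrSet x (cst i) e) (fill_array x i.+1 es') else SSkip.

Definition build_array x es := SSeq (SAssign x (ENewArr (cst (size es)))) (fill_array x 0 es).

Fixpoint pevals loc (es : seq expr) : option (seq val) :=
  if es is e :: es' then
    match peval loc e, pevals loc es' with
    | Some w, Some ws => Some (w :: ws) | _, _ => None end
  else Some [::].

Lemma set_nth_cat (pre post : seq val) z w i : size pre = i ->
  set_nth (VNat 0) (pre ++ z :: post) i w = pre ++ w :: post.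
Proof. by move=> <-; elim: pre => //= a pre' ->. Qed.

(* Register 1 holds a token array, 21 is an index, 22 the result, 23 scratch;
   the encoding of the token array is left in 3. *)
Definition enc_tokens_loop :=
  SWhile (EBin BLt (var 21) (ELen (var 1)))
    (SSeq (SAssign 23 (ENewArr (cst 2)))
    (SSeq (SArrSet 23 (cst 1) (EIndex (var 1) (var 21)))
    (SSeq (SArrSet 22 (var 21) (var 23))
          (SAssign 21 (EBin BAdd (var 21) (cst 1)))))).

Definition enc_tokens_prog :=
  SSeq (SAssign 22 (ENewArr (ELen (var 1))))
  (SSeq (SAssign 21 (cst 0)) (SSeq enc_tokens_loop (build_array 3 [:: cst 2; var 22]))).

Section ArrayPrograms.

Variables (E : senv) (nd : wtree) (p : seq nat) (fs : fstore).
Local Notation wp := (wp E nd p fs).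

Lemma wp_fill_array x loc0 es i pre post ws loc :
  x \notin flatten (map vars es) -> pevals loc0 es = Some ws ->
  lookup_loc loc x = Some (VArr (pre ++ post)) -> size pre = i -> size post = size es ->
  (forall y, y != x -> lookup_loc loc y = lookup_loc loc0 y) ->
  wp loc (fill_array x i es) (fun l => lookup_loc l x = Some (VArr (pre ++ ws)) /\
         forall y, y != x -> lookup_loc l y = lookup_loc loc0 y).
Proof.
elim: es i pre post ws loc => [|e es IH] i pre post ws loc /=.
  move=> _ [<-] Hx _ Hs Hy; apply: wp_skip; split=> //.
  by case: post Hs Hx => // _; rewrite cats0.
rewrite mem_cat negb_or => /andP [Hxe Hxes].
case Ee: (peval loc0 e) => [w|] //; case Ees: (pevals loc0 es) => [ws'|] // [<-].
case: post => // z post Hx Hi [Hs] Hy.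
have Hpe : peval loc e = Some w.
  rewrite -Ee; apply: peval_ext => y Hy'; apply: Hy.
  by apply: contraNneq Hxe => <-.
apply: wp_seq; apply: (@wp_arrset _ _ _ _ _ _ _ _ (pre ++ z :: post) i w) => //.
  by rewrite size_cat /= -Hi addnS ltnS leq_addr.
rewrite set_nth_cat // -cat_rcons.
apply: wp_weaken; first apply: (IH i.+1 (rcons pre w) post ws') => //.
- by rewrite lookup_cons eqxx.
- by rewrite size_rcons Hi.
- by move=> y Hyx; rewrite lookup_cons eq_sym (negbTE Hyx) Hy.
by move=> l [H1 H2]; rewrite cat_rcons in H1.
Qed.

Lemma wp_build_array x es ws loc :
  x \notin flatten (map vars es) -> pevals loc es = Some ws ->
  wp loc (build_array x es) (fun l => lookup_loc l x = Some (VArr ws) /\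
         forall y, y != x -> lookup_loc l y = lookup_loc loc y).
Proof.
move=> Hx Hes.
apply: wp_seq; apply: wp_assign => //.
apply: (@wp_fill_array x loc es 0 [::] (nseq (size es) (VNat 0))) => //.
- by rewrite lookup_cons eqxx.
- by rewrite size_nseq.
- by move=> y Hy; rewrite lookup_cons eq_sym (negbTE Hy).
Qed.

Lemma wp_enc_tokens_loop (flat : seq nat) k j loc (P : locals -> Prop) :
  j + k = size flat ->
  lookup_loc loc 1 = Some (VArr (map VNat flat)) ->
  lookup_loc loc 21 = Some (VNat j) ->
  lookup_loc loc 22 = Some (VArr (map (enc_val \o VNat) (take j flat) ++ nseq k (VNat 0))) ->
  (forall l, lookup_loc l 22 = Some (VArr (map (enc_val \o VNat) flat)) -> P l) ->
  wp loc enc_tokens_loop P.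
Proof.
elim: k j loc => [|k IH] j loc Hjk H1 H21 H22 HP.
  rewrite addn0 in Hjk; subst j.
  apply: wp_while_false; first by rewrite /= H1 H21 /= size_map ltnn.
  by apply: HP; rewrite H22 take_size cats0.
have Hj : j < size flat by rewrite -Hjk addnS ltnS leq_addr.
apply: wp_while_true; first by rewrite /= H1 H21 /= size_map Hj.
apply: wp_seq; apply: wp_assign => //.
apply: wp_seq; apply: (@wp_arrset _ _ _ _ _ _ _ _ [:: VNat 0; VNat 0] 1 (VNat (nth 0 flat j))) => //.
  by rewrite /= !lookup_cons /= H1 H21 /= size_map Hj (nth_map 0).
apply: wp_seq; apply: (@wp_arrset _ _ _ _ _ _ _ _ _ j (enc_val (VNat (nth 0 flat j)))).
- by rewrite !lookup_cons /= H22.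
- by rewrite /= !lookup_cons.
- by rewrite size_cat size_map size_take Hj size_nseq addnS ltnS leq_addr.
- by rewrite /= !lookup_cons.
apply: wp_assign; first by rewrite /= !lookup_cons /= H21.
apply: (IH j.+1); rewrite ?addSnnS ?lookup_cons //= ?addn1 //.
by rewrite set_nth_cat ?size_map ?size_take ?Hj // (take_nth 0 Hj) map_rcons cat_rcons.
Qed.

Lemma wp_enc_tokens_prog (flat : seq nat) loc :
  lookup_loc loc 1 = Some (VArr (map VNat flat)) ->
  wp loc enc_tokens_prog (fun l => lookup_loc l 3 = Some (enc_val (VArr (map VNat flat)))).
Proof.
move=> H1.
apply: wp_seq; apply: wp_assign; first by rewrite /= H1.
apply: wp_seq; apply: wp_assign => //.
apply: wp_seq; apply: (@wp_enc_tokens_loop flat (size flat) 0) => //.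
all: rewrite ?lookup_cons /= ?size_map ?take0 //.
move=> l G22.
apply: wp_weaken; first by apply: (@wp_build_array 3 _ [:: VNat 2; VArr (map (enc_val \o VNat) flat)]); rewrite //= G22.
by move=> l' [-> _] /=; rewrite -map_comp.
Qed.

End ArrayPrograms.

(** * The diagonal instance *)

Definition main_iface := Iface 1 [:: Proto main_fn TInt [::]] [::].
Definition diag_iface := Iface 2 [:: Proto 0 TInt [::]] [::].
Definition alg_iface := Iface 3 [:: Proto 1 TInt [:: TInt]] [::].
Definition chain_iface1 := Iface 4 [:: Proto 0 TInt [::]] [::].
Definition chain_iface2 := Iface 5 [:: Proto 0 TInt [::]] [::].
Definition diag_ifaces := [:: main_iface; diag_iface; alg_iface; chain_iface1; chain_iface2].

Definition root_main := SSeq (SExpr (ECall 0 0 [::])) (SOutput (cst 0)).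
Definition root_comp := Comp 1 [:: 1] [:: 2] [:: (1, main_fn, FunDef [::] root_main)].
Definition chain_comp1 := Comp 3 [:: 2] [:: 4] [:: (2, 0, FunDef [::] SSkip)].
Definition chain_comp2 := Comp 4 [:: 4] [:: 5] [:: (4, 0, FunDef [::] SSkip)].
Definition chain_comp3 := Comp 5 [:: 5] [::] [:: (5, 0, FunDef [::] SSkip)].
Definition alg_comp (A : stmt) := Comp 6 [:: 3] [::] [:: (3, 1, FunDef [:: 0] (callee_body A))].

Definition diag_sys := WNode 1 [:: (2, WNode 2 [:: (3, WNode 6 [::])])].
Definition chain_sys := WNode 1 [:: (2, WNode 3 [:: (4, WNode 4 [:: (5, WNode 5 [::])])])].
Definition diag_req : seq (seq bool * nat) := [:: ([::], 0)].

(* Assembles [enc_instance (diag_instance A)] in register 8 from register 2,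
   holding [diag_payload A], and register 3, holding [enc_val (diag_data A)];
   registers 30 to 41 hold encodings of the intermediate subterms. *)
Definition assemble_instance := foldr SSeq SSkip [::
  build_array 30 [:: cst 0; var 3];
  build_array 31 [:: cst 1; cst 1; var 30];
  build_array 32 [:: cst 3; var 31; EIndex (var 2) (cst 1)];
  build_array 33 [:: EConst (VArr [::]); var 32];
  build_array 34 [:: cst 2; cst 0; var 33];
  build_array 35 [:: var 34];
  build_array 36 [:: cst 2; EConst (VArr [:: VNat 2]); EConst (VArr [:: VNat 3]); var 35];
  build_array 37 [:: EConst (VArr [:: VNat 0]); EIndex (var 2) (cst 0)];
  build_array 38 [:: cst 3; cst 1; var 37];
  build_array 39 [:: var 38];
  build_array 40 [:: cst 6; EConst (VArr [:: VNat 3]); EConst (VArr [::]); var 39];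
  build_array 41 [:: EConst (enc_component root_comp); var 36; EConst (enc_component chain_comp1);
                     EConst (enc_component chain_comp2); EConst (enc_component chain_comp3); var 40];
  build_array 8 [:: cst 0;
    EConst (enc_seq (fun q => VArr [:: enc_seq enc_bool q.1; VNat q.2]) diag_req);
    EConst (enc_seq enc_iface diag_ifaces); var 41; cst 1; EConst (enc_wtree chain_sys)]].

Definition rebuild_instance := SSeq decode_prog (SSeq enc_tokens_prog assemble_instance).

Definition refute_alg :=
  SSeq (SAssign 9 (ECall 0 1 [:: var 8]))
       (SIf (EBin BEq (var 9) (EConst (enc_wtree diag_sys))) loop_forever SSkip).

Definition diag_rest := SSeq rebuild_instance refute_alg.

(* The instance contains the code of [diag_comp A], and so the constant
   [diag_data A] itself; that constant carries only the other parts of the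
   code, its own encoding being recomputed by [enc_tokens_prog]. *)
Definition diag_payload (A : stmt) := VArr [:: enc_stmt (callee_body A); enc_stmt diag_rest].
Definition diag_data (A : stmt) := VArr (map VNat (tokens (diag_payload A))).
Definition diag_body (A : stmt) := SSeq (SAssign 1 (EConst (diag_data A))) diag_rest.
Definition diag_comp (A : stmt) := Comp 2 [:: 2] [:: 3] [:: (2, 0, FunDef [::] (diag_body A))].

Definition diag_comps (A : stmt) :=
  [:: root_comp; diag_comp A; chain_comp1; chain_comp2; chain_comp3; alg_comp A].
Definition diag_instance (A : stmt) := Inst 0 diag_req diag_ifaces (diag_comps A) 1 chain_sys.

Definition diag_env (A : stmt) := SEnv diag_ifaces (diag_comps A) [::].
Definition diag_node := WNode 2 [:: (3, WNode 6 [::])].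

Ltac rewrite_lookups := repeat match goal with
  | H : lookup_loc ?l ?y = _ |- context [lookup_loc ?l ?y] => rewrite H
  | H : forall y, _ -> lookup_loc ?l y = lookup_loc _ y |- context [lookup_loc ?l ?z] =>
      rewrite (H z); [ | by []]
  end.

Lemma wp_rebuild_instance E nd p fs A loc :
  lookup_loc loc 1 = Some (diag_data A) ->
  wp E nd p fs loc rebuild_instance
    (fun l => lookup_loc l 8 = Some (enc_instance (diag_instance A))).
Proof.
move=> H1.
apply: wp_seq; apply: wp_weaken; first exact: (wp_decode_prog _ _ _ _ H1).
move=> l1 [G2 G1].
apply: wp_seq; apply: wp_weaken.
  by apply: wp_frame; apply: (@wp_enc_tokens_prog _ _ _ _ (tokens (diag_payload A))); rewrite G1 H1.
move=> l2 [G3 Gf2].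
have G22 : lookup_loc l2 2 = Some (diag_payload A) by rewrite Gf2.
rewrite /assemble_instance /=.
repeat (apply: wp_seq; apply: wp_weaken;
          first (apply: wp_build_array; [by [] | rewrite /=; rewrite_lookups; reflexivity]);
        let Hx := fresh "Hx" in let Hf := fresh "Hf" in move=> ? [Hx Hf]).
by apply: wp_skip; rewrite_lookups.
Qed.

Lemma wp_call_alg A fuel x w loc fs :
  run_alg fuel A x = Some w -> lookup_loc loc 8 = Some x ->
  wp (diag_env A) diag_node [:: 0] fs loc (SAssign 9 (ECall 0 1 [:: var 8]))
     (fun l => l = (9, w) :: loc).
Proof.
move=> Hr H8.
have [l Hl] := @run_alg_callee fuel A x w (diag_env A) 6 [:: 0; 0] fs (fun _ _ => erefl) erefl Hr.
case: fuel Hr Hl => [|n] // Hr Hl.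
exists n.+3, ((9, w) :: loc); split=> //.
have -> : exec n.+3 (diag_env A) diag_node [:: 0] loc fs (SAssign 9 (ECall 0 1 [:: var 8])) =
  rbind (eval n.+2 (diag_env A) diag_node [:: 0] loc fs (ECall 0 1 [:: var 8]))
        (fun r => ROk (ONormal, (9, r.1) :: loc, r.2)) by [].
rewrite eval_call.
have -> : eval_args n.+1 (diag_env A) diag_node [:: 0] loc [:: var 8] fs = ROk ([:: x], fs).
  by rewrite /= H8.
by rewrite /call_result; cbn -[exec]; rewrite Hl.
Qed.

Lemma wp_diag_rebuild A fs :
  wp (diag_env A) diag_node [:: 0] fs [::] (SAssign 1 (EConst (diag_data A)))
    (fun l1 => wp (diag_env A) diag_node [:: 0] fs l1 rebuild_instance
       (fun l2 => lookup_loc l2 8 = Some (enc_instance (diag_instance A)))).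
Proof. by apply: wp_assign => //; apply: wp_rebuild_instance; rewrite lookup_cons. Qed.

Lemma diag_body_returns A fuel w fs :
  run_alg fuel A (enc_instance (diag_instance A)) = Some w -> ~~ val_eqb w (enc_wtree diag_sys) ->
  wp (diag_env A) diag_node [:: 0] fs [::] (diag_body A) (fun _ => True).
Proof.
move=> Hr Hw.
apply: wp_seq; apply: wp_weaken; first exact: wp_diag_rebuild.
move=> l1 H1; apply: wp_seq; apply: wp_weaken; first exact: H1.
move=> l2 H8; apply: wp_seq; apply: wp_weaken; first exact: (wp_call_alg fs Hr H8).
move=> l3 ->; apply: (@wp_if _ _ _ _ _ _ false); first by rewrite /= ?lookup_cons /= (negbTE Hw).
exact: wp_skip.
Qed.

Lemma diag_body_diverges A fuel w fs :
  run_alg fuel A (enc_instance (diag_instance A)) = Some w -> val_eqb w (enc_wtree diag_sys) ->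
  diverges (diag_env A) diag_node [:: 0] fs [::] (diag_body A).
Proof.
move=> Hr Hw.
apply: diverges_seq; apply: wp_weaken; first exact: wp_diag_rebuild.
move=> l1 H1; apply: diverges_seq; apply: wp_weaken; first exact: H1.
move=> l2 H8; apply: diverges_seq; apply: wp_weaken; first exact: (wp_call_alg fs Hr H8).
move=> l3 ->; apply: diverges_if; first by rewrite /= ?lookup_cons /= Hw.
by move=> n; apply: loop_forever_diverges.
Qed.

(** * Valid and working systems of the diagonal instance *)

Lemma diag_sys_outputs A :
  wp (diag_env A) diag_node [:: 0] [::] [::] (diag_body A) (fun _ => True) ->
  outputs diag_ifaces (diag_comps A) diag_sys [::] 0.
Proof.
case=> n [l' [H _]]; exists n.+3; rewrite /run_system; cbn -[exec].
by rewrite (_ : find_main root_comp = Some (FunDef [::] root_main)) //= H.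
Qed.

Lemma diag_sys_silent A :
  diverges (diag_env A) diag_node [:: 0] [::] [::] (diag_body A) ->
  ~ outputs diag_ifaces (diag_comps A) diag_sys [::] 0.
Proof.
move=> HD [[|[|[|n]]]] //; rewrite /run_system; cbn -[exec].
by rewrite (_ : find_main root_comp = Some (FunDef [::] root_main)) //= HD.
Qed.

Lemma chain_sys_working A : working diag_req diag_ifaces (diag_comps A) chain_sys.
Proof. by move=> i o; rewrite inE => /eqP [-> ->]; exists 10. Qed.

Lemma diag_lib_ok A : lib_ok diag_ifaces (diag_comps A).
Proof.
split=> //; split=> // C /=.
case=> [<-|[<-|[<-|[<-|[<-|[<-|[]]]]]]]; split.
all: try by move=> I; rewrite !inE => /orP[] /eqP ->; eexists.
all: try by move=> I; rewrite !inE => /eqP ->; eexists.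
all: by move=> I Ii; rewrite !inE => /eqP -> [<-] pr /= [<- | []]; eexists.
Qed.

Lemma diag_sys_based A : based_on (diag_comps A) 1 diag_sys.
Proof. by split=> //=; repeat (split || eexists). Qed.

Lemma chain_sys_based A : based_on (diag_comps A) 1 chain_sys.
Proof. by split=> //=; repeat (split || eexists). Qed.

Lemma diag_instance_valid A : valid_instance (diag_instance A).
Proof.
split; first exact: diag_lib_ok.
split; first by move=> i o; rewrite inE => /eqP [-> _].
split; first by eexists; split; first reflexivity; eexists.
split; [exact: chain_sys_based | exact: chain_sys_working].
Qed.

Lemma valid_tree_one_req Lc anc cn kids C r :
  valid_tree Lc anc (WNode cn kids) -> find_comp Lc cn = Some C -> creq C = [:: r] ->
  exists t C', [/\ kids = [:: (r, t)], find_comp Lc (root_label t) = Some C', r \in cprov C'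
                 & valid_tree Lc (cn :: anc) t].
Proof.
move=> /= [_ [C0 [HC0 Hk]]] HC Hr; move: Hk; rewrite HC in HC0; case: HC0 => <-; rewrite Hr.
case: kids => [|[I t] [|[? ?] ?]] //= [-> [[C' [HC' HI]] [Hv Hk]]]; last by case: Hk.
by exists t, C'.
Qed.

Lemma valid_tree_no_req Lc anc cn kids C :
  valid_tree Lc anc (WNode cn kids) -> find_comp Lc cn = Some C -> creq C = [::] -> kids = [::].
Proof.
move=> /= [_ [C0 [HC0 Hk]]] HC Hr; move: Hk; rewrite HC in HC0; case: HC0 => <-; rewrite Hr.
by case: kids => [|[]].
Qed.

Lemma diag_provider A n C r : find_comp (diag_comps A) n = Some C -> r \in cprov C ->
  n \in (match r with 2 => [:: 2; 3] | 3 => [:: 6] | _ => [:: r] end).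
Proof. by do 7 (case: n => [|n]; first by move=> //= [<-]; rewrite inE => /eqP ->). Qed.

Lemma based_diag_cases A S : based_on (diag_comps A) 1 S -> S = diag_sys \/ S = chain_sys.
Proof.
case: S => cn kids [Hcn Hv]; rewrite /= in Hcn; subst cn.
have [[n1 k1] [C1 [-> HC1 HI1 Hv1]]] := valid_tree_one_req Hv erefl erefl.
move: (diag_provider HC1 HI1); rewrite !inE => /orP [] /eqP /= En1; subst n1.
  have [[n2 k2] [C2 [-> HC2 HI2 Hv2]]] := valid_tree_one_req Hv1 erefl erefl.
  move: (diag_provider HC2 HI2); rewrite inE => /eqP /= En2; subst n2.
  by rewrite (valid_tree_no_req Hv2 erefl erefl); left.
have [[n2 k2] [C2 [-> HC2 HI2 Hv2]]] := valid_tree_one_req Hv1 erefl erefl.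
move: (diag_provider HC2 HI2); rewrite inE => /eqP /= En2; subst n2.
have [[n3 k3] [C3 [-> HC3 HI3 Hv3]]] := valid_tree_one_req Hv2 erefl erefl.
move: (diag_provider HC3 HI3); rewrite inE => /eqP /= En3; subst n3.
by rewrite (valid_tree_no_req Hv3 erefl erefl); right.
Qed.

(** * Decoding the answer *)

Lemma val_eqbP w w' : reflect (w = w') (val_eqb w w').
Proof.
apply: (iffP idP) => [|<-].
  elim/val_nested_ind: w w' => [n|b|l Hl] [] //= => [m /eqP -> | b' /eqP -> | m] //.
  elim: l m Hl => [|x l IH] [|y m] //= [Hx Hl] /andP [/Hx -> /(IH m Hl) [->]] //.
elim/val_nested_ind: w => //= l.
by elim: l => //= x l IH [-> /IH].
Qed.

Fixpoint vsize (w : val) : nat :=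
  if w is VArr l then (sumn (map vsize l)).+1 else 1.

Lemma dec_wtreeK : ocancel dec_wtree enc_wtree.
Proof.
suff H n w t : vsize w <= n -> dec_wtree w = Some t -> enc_wtree t = w.
  by move=> w; case Ew: (dec_wtree w) => [t|] //=; apply: H Ew.
elim: n w t => [|n IH] [] // [|[cn|b|l'] [|[n'|b'|ks] [|z r]]] //= t Hs.
have dec_kids ks0 r0 : sumn (map vsize ks0) <= n ->
  (fix go (ks : seq val) : option (seq (nat * wtree)) :=
     match ks with
     | [::] => Some [::]
     | VArr [:: VNat Ilab; w] :: ks' =>
         match dec_wtree w, go ks' with
         | Some t, Some r => Some ((Ilab, t) :: r)
         | _, _ => None
         end
     | _ => None
     end) ks0 = Some r0 ->
  map (fun q => VArr [:: VNat q.1; enc_wtree q.2]) r0 = ks0.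
  elim: ks0 r0 => [|x ks0 IHk] r0 Hsz /=; first by case=> <-.
  case: x Hsz => // [[|[I|?|?] [|w [|? ?]]]] //= Hsz.
  case Ew: (dec_wtree w) => [tw|] //; case Eg: (_ ks0) => [rg|] // [<-] /=.
  by rewrite (IH w tw) ?(IHk rg) //; lia.
case Eg: (_ ks) => [rg|] //= [<-] /=.
by rewrite (dec_kids ks rg) //; move: Hs => /=; lia.
Qed.

Unset Implicit Arguments.

Theorem mainTheorem15 (EnvT : Type) (Env : wtree -> EnvT) :
  ~ (exists A : stmt, solves_ESAdapt Env A).
Proof.
case=> A HA.
have [fuel [w [S' [Hrun [Hdec [Hbased [Hwork Hopt]]]]]]] := HA _ (diag_instance_valid A).
have Hreq : (([::] : seq bool), 0) \in diag_req by rewrite inE.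
case: (val_eqbP w (enc_wtree diag_sys)) => [Ew | Nw].
  have ES' : S' = diag_sys by move: Hdec; rewrite Ew => -[].
  rewrite ES' in Hwork; apply: (diag_sys_silent _ (Hwork _ _ Hreq)).
  by apply: diag_body_diverges Hrun _; apply/val_eqbP.
have Hdiag : working diag_req diag_ifaces (diag_comps A) diag_sys.
  move=> i o; rewrite inE => /eqP [-> ->]; apply: diag_sys_outputs.
  by apply: diag_body_returns Hrun _; apply/val_eqbP.
have := Hopt _ (diag_sys_based A) Hdiag.
case: (based_diag_cases Hbased) => ES'; rewrite ES' in Hdec * => // _.
by apply: Nw; rewrite -(dec_wtreeK w) Hdec.
Qed.
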